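(* Let $X$ be a minimally $(d + 1)$-rigid normal pseudomanifold of dimension $d \geq 3$. Then every clique of size at most $d$ in the edge graph of $X$ is a face of $X$.
   Context: A simplicial complex is a finite set of finite sets closed under taking subsets; an element of size $i+1$ is an $i$-face (the empty set is the unique $(-1)$-face); 1-faces are edges; $V(X)$ is the vertex set. The edge graph of $X$ is the graph on $V(X)$ whose edges are the 1-faces of $X$; a clique is a set of pairwise adjacent vertices. A pure $d$-dimensional complex has all maximal faces (facets) of dimension $d$. The link of a face $\alpha$ is $\mathrm{lk}_X(\alpha)=\{\beta\in X:\beta\cap\alpha=\emptyset,\ \alpha\cup\beta\in X\}$. A $d$-dimensional normal pseudomanifold ($d\ge1$) is a pure $d$-dimensional simplicial complex in which every $(d-1)$-face lies in exactly two facets and the link of every face of dimension $\le d-2$ (including the empty face) is connected. For a positive integer $q$, a $d$-dimensional simplicial complex $X$ is $q$-rigid if $X$ is connected and for every $A\subseteq V(X)$ disjoint from at least one $d$-face of $X$, the number of edges of $X$ meeting $A$ is at least $q\cdot\#(A)$. An $n$-vertex $d$-dimensional complex is minimally $q$-rigid if it is $q$-rigid and has exactly $(n-d-1)q+\binom{d+1}{2}$ edges. *)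

From mathcomp Require Import all_boot.
Set Implicit Arguments. Unset Strict Implicit. Unset Printing Implicit Defensive.

Section Complexes.
Variable T : finType.

Definition is_complex (X : {set {set T}}) : Prop :=
  forall s t : {set T}, s \in X -> t \subset s -> t \in X.

Definition verts (X : {set {set T}}) : {set T} := \bigcup_(s in X) s.

Definition is_dim (X : {set {set T}}) (d : nat) : Prop :=
  is_complex X /\ (exists s, (s \in X) /\ #|s| = d.+1) /\
  (forall s, s \in X -> #|s| <= d.+1).

Definition is_pure (X : {set {set T}}) (d : nat) : Prop :=
  is_dim X d /\
  forall s, s \in X -> (forall t, t \in X -> s \subset t -> t = s) -> #|s| = d.+1.

Definition link (X : {set {set T}}) (a : {set T}) : {set {set T}} :=
  [set b in X | [disjoint b & a] && ((a :|: b) \in X)].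

Definition adj (X : {set {set T}}) : rel T :=
  fun u v => (u != v) && ([set u; v] \in X).

Definition connected_cx (X : {set {set T}}) : Prop :=
  forall u v, u \in verts X -> v \in verts X -> connect (adj X) u v.

Definition normal_pseudomanifold (X : {set {set T}}) (d : nat) : Prop :=
  1 <= d /\ is_pure X d /\
  (forall s, s \in X -> #|s| = d ->
     #|[set t in X | (#|t| == d.+1) && (s \subset t)]| = 2) /\
  (forall a, a \in X -> #|a| <= d.-1 -> connected_cx (link X a)).

Definition edges_meeting (X : {set {set T}}) (A : {set T}) : nat :=
  #|[set e in X | (#|e| == 2) && ~~ [disjoint e & A]]|.

Definition num_edges (X : {set {set T}}) : nat :=
  #|[set e in X | #|e| == 2]|.

Definition q_rigid (q : nat) (X : {set {set T}}) (d : nat) : Prop :=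
  is_dim X d /\ connected_cx X /\
  forall A : {set T}, A \subset verts X ->
    (exists f, [/\ f \in X, #|f| = d.+1 & [disjoint f & A]]) ->
    q * #|A| <= edges_meeting X A.

(* minimally q-rigid: q-rigid with exactly (n-d-1)q + C(d+1,2) edges
   (n >= d+1 since X has a d-face, so the subtraction is exact) *)
Definition min_q_rigid (q : nat) (X : {set {set T}}) (d : nat) : Prop :=
  q_rigid q X d /\ num_edges X = (#|verts X| - d.+1) * q + 'C(d.+1, 2).

Definition is_clique (X : {set {set T}}) (C : {set T}) : Prop :=
  C \subset verts X /\
  forall u v, u \in C -> v \in C -> u != v -> [set u; v] \in X.

End Complexes.

(* Minimal (d+1)-rigidity makes X sparse: a vertex set B spanning a d-face
   carries at most (d+1)|B| - C(d+2,2) edges, and sparsity passes to vertex links.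
   By induction on the dimension, a sparse normal pseudomanifold is tight, i.e.
   attains this bound on its whole vertex set.  In dimension 2 this is the Euler
   characteristic bound 3|V| <= |E| + 6, obtained by adding triangles one at a time
   across edges off a spanning tree: the boundary edges of a set of triangles have
   even degree at every vertex, so they never all lie in the tree.  In higher
   dimension every tight link is rigid, every vertex star is a cone over its link,
   hence (d+1)-rigid, and stars of adjacent vertices share a facet, so they glue to
   a (d+1)-rigidity of X that reverses the sparsity inequality.  Finally a tight
   link contains every edge of X between its vertices, so for a clique C through v,
   C minus v is a clique of the link of v, by induction a face of it. *)

From mathcomp Require Import all_boot zify.
Set Implicit Arguments. Unset Strict Implicit. Unset Printing Implicit Defensive.

Section Finsets.
Variable U : finType.

Lemma cardsU_disjoint (A B : {set U}) : [disjoint A & B] -> #|A :|: B| = #|A| + #|B|.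
Proof. by move=> dAB; apply/eqP; rewrite (leq_card_setU A B). Qed.

Lemma not_disjointP (A B : {set U}) :
  reflect (exists2 x, x \in A & x \in B) (~~ [disjoint A & B]).
Proof.
rewrite -setI_eq0; apply: (iffP (set0Pn _)).
  by case=> x; rewrite inE => /andP[]; exists x.
by case=> x xA xB; exists x; rewrite inE xA.
Qed.

Lemma grow_ind (V S0 : {set U}) (P : {set U} -> Prop) : S0 \subset V -> P S0 ->
  (forall S : {set U}, S \subset V -> S != V -> P S ->
     exists2 y, y \in V :\: S & P (y |: S)) ->
  P V.
Proof.
move=> sS0 PS0 step; move: {2}#|V :\: S0| (erefl #|V :\: S0|) => k.
elim: k S0 sS0 PS0 => [|k IH] S sS PS hk.
  suff <- : S = V by [].
  by apply/eqP; rewrite eqEsubset sS -setD_eq0 -cards_eq0 hk.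
have nSV : S != V by apply/eqP=> eSV; move: hk; rewrite eSV setDv cards0.
have [y yVS PyS] := step S sS nSV PS.
have [yS yV] : y \notin S /\ y \in V by move: yVS; rewrite inE => /andP[].
apply: (IH (y |: S)) => //; first by rewrite subUset sub1set yV.
have -> : V :\: (y |: S) = (V :\: S) :\ y by apply/setP=> z; rewrite !inE negb_or andbA.
by have := cardsD1 y (V :\: S); rewrite hk yVS => -[].
Qed.

Lemma cards_sum_pred (A : {set U}) (P : pred U) :
  #|[set x in A | P x]| = \sum_(x in A) P x.
Proof.
rewrite -sum1_card (eq_bigl (fun x => (x \in A) && P x)); last first.
  by move=> x; rewrite /= !inE.
by rewrite big_mkcondr /=; apply: eq_bigr => x _; case: (P x).
Qed.

End Finsets.

Section Complexes.
Variable T : finType.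
Implicit Types (X L : {set {set T}}) (A B W : {set T}).

Lemma sub_verts L s : s \in L -> s \subset verts L.
Proof. by move=> sL; apply: (bigcup_sup s). Qed.

Lemma vertsP L x : is_complex L -> reflect ([set x] \in L) (x \in verts L).
Proof.
move=> cL; apply: (iffP bigcupP).
  by case=> s sL xs; apply: cL sL _; rewrite sub1set.
by move=> h; exists [set x]; rewrite ?set11.
Qed.

Lemma adj_sym L : symmetric (adj L).
Proof. by move=> x y; rewrite /adj eq_sym setUC. Qed.

Lemma adj_verts L x y : adj L x y -> y \in verts L.
Proof.
case/andP=> _ h; apply/bigcupP; exists [set x; y] => //.
by rewrite !inE eqxx orbT.
Qed.

Lemma exit_edge L (S : {set T}) x0 y0 : connected_cx L ->
  x0 \in S -> x0 \in verts L -> y0 \in verts L -> y0 \notin S ->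
  exists x y, [/\ x \in S, y \notin S & adj L x y].
Proof.
move=> cc x0S x0V y0V y0S.
case: (boolP [exists x, [exists y, [&& x \in S, y \notin S & adj L x y]]]).
  by case/existsP=> x /existsP[y /and3P[]]; exists x, y.
move=> /negP nex.
have cl : closed (adj L) S.
  move=> x y axy; apply/idP/idP=> h; apply/negPn/negP=> h'; apply: nex.
    by apply/existsP; exists x; apply/existsP; exists y; rewrite h h' axy.
  by apply/existsP; exists y; apply/existsP; exists x; rewrite h h' adj_sym axy.
have := closed_connect cl (cc _ _ x0V y0V).
by rewrite x0S (negbTE y0S).
Qed.

Lemma connected_grow L (P : {set T} -> Prop) v0 :
  connected_cx L -> v0 \in verts L -> P [set v0] ->
  (forall (S : {set T}) x y, S \subset verts L -> x \in S -> y \notin S -> adj L x y ->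
     P S -> P (y |: S)) ->
  P (verts L).
Proof.
move=> cc v0V P0 step.
suff [] : P (verts L) /\ v0 \in verts L by [].
apply: (@grow_ind _ (verts L) [set v0] (fun S => P S /\ v0 \in S));
  rewrite ?sub1set ?set11 //.
move=> S sS nSV [PS v0S].
have [y0 y0VS] : exists y0, y0 \in verts L :\: S.
  by apply/set0Pn; rewrite setD_eq0; apply: contra nSV => sVS; rewrite eqEsubset sS.
have [y0S y0V] : y0 \notin S /\ y0 \in verts L by move: y0VS; rewrite inE => /andP[].
have [x [y [xS yS axy]]] := exit_edge cc v0S (subsetP sS _ v0S) y0V y0S.
exists y; first by rewrite inE yS (adj_verts axy).
by split; [apply: step axy PS | rewrite inE v0S orbT].
Qed.

Lemma inj_pair (v : T) : injective (fun a => [set v; a]).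
Proof.
move=> a b /setP H; have := H a; have := H b; rewrite !inE !eqxx !orbT.
by case/orP=> /eqP -> /esym /orP[] /eqP.
Qed.

(** * Rigidity *)

Definition meeting (Ed : {set {set T}}) A := [set e in Ed | ~~ [disjoint e & A]].

(* q-rigidity of the edges [Ed] on the vertices [W] relative to the top faces [Fc];
   in this form it survives gluing along a common top face and coning. *)
Definition rigid (q : nat) W (Ed Fc : {set {set T}}) : Prop :=
  [/\ (forall e, e \in Ed -> e \subset W), (forall f, f \in Fc -> f \subset W) &
   forall A, A \subset W -> (exists2 f, f \in Fc & [disjoint f & A]) ->
     q * #|A| <= #|meeting Ed A| ].

Lemma rigidU_bound q W1 W2 E1 E2 F1 F2 f0 :
  rigid q W1 E1 F1 -> rigid q W2 E2 F2 -> f0 \in F1 -> f0 \in F2 ->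
  forall A, A \subset W1 :|: W2 -> (exists2 f, f \in F1 & [disjoint f & A]) ->
  q * #|A| <= #|meeting (E1 :|: E2) A|.
Proof.
move=> [E1W F1W r1] [E2W F2W r2] f01 f02 A sA [f fF dfA].
have h1 : q * #|A :&: W1| <= #|meeting E1 (A :&: W1)|.
  apply: r1; first exact: subsetIr.
  by exists f => //; apply: disjointWr dfA; apply: subsetIl.
have h2 : q * #|A :\: W1| <= #|meeting E2 (A :\: W1)|.
  apply: r2.
    apply/subsetP=> x; rewrite inE => /andP[xW1 xA].
    by move/subsetP: sA => /(_ x xA); rewrite inE (negbTE xW1).
  exists f0 => //; rewrite -setI_eq0; apply/eqP/setP=> x; rewrite !inE.
  apply/negP=> /and3P[xf0 xW1 _].
  by move/subsetP: (F1W f0 f01) => /(_ x xf0); rewrite (negbTE xW1).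
have dj : [disjoint meeting E1 (A :&: W1) & meeting E2 (A :\: W1)].
  rewrite -setI_eq0; apply/eqP/setP=> e; rewrite /meeting !inE.
  apply/negP=> /andP[/andP[eE1 _] /andP[_ /not_disjointP[x xe]]].
  rewrite inE => /andP[xW1 _].
  by move/subsetP: (E1W e eE1) => /(_ x xe); rewrite (negbTE xW1).
have sub : meeting E1 (A :&: W1) :|: meeting E2 (A :\: W1) \subset
           meeting (E1 :|: E2) A.
  apply/subsetP=> e; rewrite /meeting !inE => /orP[] /andP[eE /not_disjointP[x xe]];
   rewrite !inE => H; rewrite eE ?orbT /=; apply/not_disjointP; exists x => //;
   by case/andP: H.
have := subset_leq_card sub; rewrite (cardsU_disjoint dj).
have := cardsID W1 A; lia.
Qed.

Lemma rigidU q W1 W2 E1 E2 F1 F2 :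
  rigid q W1 E1 F1 -> rigid q W2 E2 F2 -> (exists2 f0, f0 \in F1 & f0 \in F2) ->
  rigid q (W1 :|: W2) (E1 :|: E2) (F1 :|: F2).
Proof.
move=> r1 r2 [f0 f01 f02].
have [E1W F1W _] := r1; have [E2W F2W _] := r2.
split.
- move=> e; rewrite inE => /orP[/E1W|/E2W] s; apply: subset_trans s _.
    exact: subsetUl.
  exact: subsetUr.
- move=> f; rewrite inE => /orP[/F1W|/F2W] s; apply: subset_trans s _.
    exact: subsetUl.
  exact: subsetUr.
move=> A sA [f]; rewrite inE => /orP[] fF dfA.
  by apply: (rigidU_bound r1 r2 f01 f02 sA); exists f.
rewrite setUC; apply: (rigidU_bound r2 r1 f02 f01); first by rewrite setUC.
by exists f.
Qed.

Lemma rigid_cone q W Ed Fc v : rigid q W Ed Fc -> v \notin W ->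
  rigid q.+1 (v |: W) (Ed :|: [set [set v; w] | w in W]) [set v |: f | f in Fc].
Proof.
move=> [EW FW r] vW; split.
- move=> e; rewrite inE => /orP[/EW s|].
    by apply: subset_trans s (subsetUr _ _).
  case/imsetP=> w wW ->; apply/subsetP=> x; rewrite !inE => /orP[->//|/eqP->].
  by rewrite wW orbT.
- by move=> g /imsetP[f fF ->]; exact: setUS (FW f fF).
move=> A sA [g /imsetP[f fF ->] dgA].
have vA : v \notin A by rewrite (disjointFr dgA) // setU11.
have dfA : [disjoint f & A] by apply: disjointWl dgA; apply: subsetUr.
have sAW : A \subset W.
  apply/subsetP=> x xA; move/subsetP: sA => /(_ x xA).
  by case/setU1P=> [xv|//]; move: vA; rewrite -xv xA.
have h1 := r A sAW (ex_intro2 _ _ f fF dfA).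
set S2 := [set [set v; a] | a in A].
have cS2 : #|S2| = #|A| by rewrite card_imset //; apply: inj_pair.
have dj : [disjoint meeting Ed A & S2].
  rewrite -setI_eq0; apply/eqP/setP=> e; rewrite !inE.
  apply/negP=> /andP[/andP[eE _] /imsetP[a aA ea]].
  move/subsetP: (EW e eE) => /(_ v); rewrite ea !inE eqxx /= => /(_ isT) vW'.
  by move: vW; rewrite vW'.
have sub : meeting Ed A :|: S2 \subset meeting (Ed :|: [set [set v; w] | w in W]) A.
  apply/subsetP=> e; rewrite /meeting !inE => /orP[/andP[-> ->]//|/imsetP[a aA ->]].
  apply/andP; split.
    by apply/orP; right; apply/imsetP; exists a => //; move/subsetP: sAW; apply.
  by apply/not_disjointP; exists a; rewrite // !inE eqxx orbT.
have := subset_leq_card sub; rewrite cardsU_disjoint // cS2 mulSn; lia.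
Qed.

Lemma rigid_bigcup q L (W : T -> {set T}) (E F : T -> {set {set T}}) :
  connected_cx L -> verts L != set0 ->
  (forall v, v \in verts L -> rigid q (W v) (E v) (F v)) ->
  (forall x y, adj L x y -> exists2 f, f \in F x & f \in F y) ->
  rigid q (\bigcup_(v in verts L) W v) (\bigcup_(v in verts L) E v)
          (\bigcup_(v in verts L) F v).
Proof.
move=> cc /set0Pn[v0 v0V] rW adjF.
pose P (S : {set T}) := rigid q (\bigcup_(v in S) W v) (\bigcup_(v in S) E v)
                    (\bigcup_(v in S) F v).
apply: (@connected_grow L P v0) => //; first by rewrite /P !big_set1; apply: rW.
move=> S x y sS xS yS axy PS.
rewrite /P !big_setU1 //= [W y :|: _]setUC [E y :|: _]setUC [F y :|: _]setUC.
apply: (rigidU PS (rW y (adj_verts axy))).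
have [f fx fy] := adjF x y axy.
by exists f => //; apply/bigcupP; exists x.
Qed.

Lemma rigidS q W (E E' F F' : {set {set T}}) :
  rigid q W E F -> E \subset E' -> F' \subset F ->
  (forall e, e \in E' -> e \subset W) -> rigid q W E' F'.
Proof.
move=> [_ FW r] sE sF E'W; split=> // [f /(subsetP sF)/FW //|A sA [f fF' dfA]].
apply: leq_trans (r A sA _) _; first by exists f => //; apply: (subsetP sF).
apply: subset_leq_card; apply/subsetP=> e; rewrite !inE => /andP[eE ->].
by rewrite (subsetP sE).
Qed.

Lemma is_complex_link L a : is_complex L -> is_complex (link L a).
Proof.
move=> cL b t; rewrite !inE => /and3P[bL dba abL] tb.
rewrite (cL _ _ bL tb) /= (disjointWl tb dba) /=.
by apply: cL abL _; apply: setUS.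
Qed.

Lemma link0 L : link L set0 = L.
Proof.
apply/setP=> b; rewrite inE set0U.
by case: (b \in L); rewrite ?andbT //= -setI_eq0 setI0 eqxx.
Qed.

Lemma in_link1 L v b : is_complex L ->
  (b \in link L [set v]) = (v \notin b) && (v |: b \in L).
Proof.
move=> cL; rewrite inE disjoint_sym disjoints1.
case: (boolP (v |: b \in L)) => h; last by rewrite !andbF.
by rewrite (cL _ _ h (subsetUr _ _)).
Qed.

Lemma verts_link1 L v u : is_complex L ->
  (u \in verts (link L [set v])) = (u != v) && ([set v; u] \in L).
Proof.
move=> cL; apply/vertsP/idP; first exact: is_complex_link.
  by rewrite in_link1 // inE eq_sym.
by rewrite in_link1 // inE eq_sym.
Qed.

Lemma link1_face L v b : is_complex L -> b \in link L [set v] -> v |: b \in L.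
Proof. by move=> cL; rewrite in_link1 // => /andP[]. Qed.

Lemma link1_notin L v b : is_complex L -> b \in link L [set v] -> v \notin b.
Proof. by move=> cL; rewrite in_link1 // => /andP[]. Qed.

Lemma face_link1 L v t : is_complex L -> t \in L -> v \in t -> t :\ v \in link L [set v].
Proof. by move=> cL tL vt; rewrite in_link1 // setD11 setD1K. Qed.

Lemma notin_verts_link1 L v : is_complex L -> v \notin verts (link L [set v]).
Proof. by move=> cL; rewrite verts_link1 // eqxx. Qed.

Lemma verts_link1_sub L v B : is_complex L -> v \in verts L ->
  B \subset verts (link L [set v]) -> v |: B \subset verts L.
Proof.
move=> cL vV sB; apply/subsetP=> x /setU1P[->//|xB].
move/subsetP: sB => /(_ x xB); rewrite verts_link1 // => /andP[_ h].
by move/subsetP: (sub_verts h); apply; rewrite !inE eqxx orbT.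
Qed.

Lemma disjoint_setU1r (b a : {set T}) x :
  [disjoint b & x |: a] = (x \notin b) && [disjoint b & a].
Proof. by rewrite -setI_eq0 setIUr setU_eq0 !setI_eq0 disjoint_sym disjoints1. Qed.

Lemma link_link1 L v a : is_complex L -> a \in link L [set v] ->
  link (link L [set v]) a = link L (v |: a).
Proof.
move=> cL; rewrite in_link1 // => /andP[va vaL]; apply/setP=> b.
rewrite [in LHS]inE !in_link1 // [in RHS]inE.
rewrite disjoint_setU1r -setUA in_setU negb_or va /=.
case: (boolP (v |: (a :|: b) \in L)) => h; last by rewrite !andbF.
have -> : v |: b \in L by apply: cL h _; apply: setUS; apply: subsetUr.
have -> : b \in L.
  by apply: cL h _; apply: subset_trans (subsetUr _ _); apply: subsetUr.
by case: (v \in b); case: [disjoint b & a].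
Qed.

Lemma pure_facet_ext L D s : is_pure L D -> s \in L ->
  exists2 t, t \in L & (#|t| == D.+1) && (s \subset t).
Proof.
move=> [[cL [_ _]] pL] sL.
pose P := [pred t : {set T} | (t \in L) && (s \subset t)].
have P0 : P s by rewrite inE sL subxx.
case: (@arg_maxnP _ s P (fun t : {set T} => #|t|) P0) => t.
rewrite inE => /andP[tL st] tmax.
exists t => //; rewrite st andbT; apply/eqP/pL => // t' t'L tt'.
have := tmax t'; rewrite inE t'L (subset_trans st tt') => /(_ isT) le.
by apply/eqP; rewrite eq_sym eqEcard tt'.
Qed.

Lemma np_complex L D : normal_pseudomanifold L D -> is_complex L.
Proof. by case=> _ [[[c _] _] _]. Qed.

Lemma np_pure L D : normal_pseudomanifold L D -> is_pure L D.
Proof. by case=> _ [p _]. Qed.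

Lemma np_top_face L D : normal_pseudomanifold L D -> exists2 f, f \in L & #|f| == D.+1.
Proof. by case=> _ [[[_ [[f [fL cf]] _]] _] _]; exists f; rewrite ?cf. Qed.

Lemma np_ridge L D s : normal_pseudomanifold L D -> s \in L -> #|s| = D ->
  #|[set t in L | (#|t| == D.+1) && (s \subset t)]| = 2.
Proof. by case=> _ [_ [r _]]; apply: r. Qed.

Lemma np_link_connected L D a : normal_pseudomanifold L D -> a \in L -> #|a| <= D.-1 ->
  connected_cx (link L a).
Proof. by case=> _ [_ [_ c]]; apply: c. Qed.

Lemma np_connected L D : normal_pseudomanifold L D -> connected_cx L.
Proof.
move=> npL; have [f fL _] := np_top_face npL.
rewrite -(link0 L); apply: (np_link_connected npL); last by rewrite cards0.
exact: (np_complex npL) _ _ fL (sub0set _).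
Qed.

Lemma cofaces_link1 L v s D : is_complex L -> s \in link L [set v] ->
  [set t in L | (#|t| == D.+1) && (v |: s \subset t)] =
  (fun t => v |: t) @: [set t in link L [set v] | (#|t| == D) && (s \subset t)].
Proof.
move=> cL sK; apply/setP=> t; apply/idP/imsetP; last first.
  case=> t0 /setIdP[t0K /andP[/eqP ct0 st0]] ->.
  apply/setIdP; split; first exact: link1_face.
  by rewrite cardsU1 (link1_notin cL t0K) ct0 eqxx /=; exact: setUS.
move/setIdP => [tL /andP[/eqP ct vst]].
have vt : v \in t by move/subsetP: vst; apply; apply: setU11.
exists (t :\ v); last by rewrite setD1K.
apply/setIdP; split; first exact: face_link1.
apply/andP; split; first by have := cardsD1 v t; rewrite vt ct => -[->].
rewrite subsetD1 (link1_notin cL sK) andbT.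
by apply: subset_trans vst; apply: subsetUr.
Qed.

Lemma np_link1 L D v : normal_pseudomanifold L D.+1 -> 1 <= D -> v \in verts L ->
  normal_pseudomanifold (link L [set v]) D.
Proof.
move=> npL D1 vV; have cL := np_complex npL; have pL := np_pure npL.
have [[_ [_ dimL]] pur] := pL.
have cK := @is_complex_link L [set v] cL.
have v1 : [set v] \in L by apply/vertsP.
split=> //; split; [split; [split=> //; split|] | split].
- have [t tL /andP[/eqP ct vt]] := pure_facet_ext pL v1.
  rewrite sub1set in vt.
  exists (t :\ v); split; first exact: face_link1.
  by move: ct; rewrite (cardsD1 v) vt => -[].
- move=> b bK; have := dimL _ (link1_face cL bK).
  by rewrite cardsU1 (link1_notin cL bK).
- move=> b bK bmax.
  have := pur _ (link1_face cL bK); rewrite cardsU1 (link1_notin cL bK) => h.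
  suff : 1 + #|b| = D.+2 by case.
  apply: h => t tL sbt; have vt : v \in t by move/subsetP: sbt; apply; apply: setU11.
  suff <- : t :\ v = b by rewrite setD1K.
  apply: bmax; first exact: face_link1.
  rewrite subsetD1 (link1_notin cL bK) andbT.
  by apply: subset_trans sbt; apply: subsetUr.
- move=> s sK cs.
  have inj : {in [set t in link L [set v] | (#|t| == D.+1) && (s \subset t)] &,
               injective (fun t => v |: t)}.
    move=> t1 t2 /setIdP[t1K _] /setIdP[t2K _] e.
    by rewrite -(setU1K (link1_notin cL t1K)) e setU1K // (link1_notin cL t2K).
  rewrite -(card_in_imset inj) -cofaces_link1 //.
  apply: (np_ridge npL (link1_face cL sK)).
  by rewrite cardsU1 (link1_notin cL sK) cs.
- move=> a aK ca; rewrite link_link1 //.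
  apply: (np_link_connected npL (link1_face cL aK)).
  by rewrite cardsU1 (link1_notin cL aK); lia.
Qed.

(** * Sparse and tight complexes *)

Definition edges_in L B := #|[set e in L | (#|e| == 2) && (e \subset B)]|.

(* The sparsity count that minimal (d+1)-rigidity forces on a d-complex. *)
Definition sparse (D : nat) L := forall B, B \subset verts L ->
  (exists2 f, f \in L & (#|f| == D.+1) && (f \subset B)) ->
  edges_in L B + 'C(D.+2, 2) <= D.+1 * #|B|.

Definition tight (D : nat) L := num_edges L + 'C(D.+2, 2) = D.+1 * #|verts L|.

Lemma bin2_mul2 m : 'C(m, 2) * 2 = m * m.-1.
Proof.
elim: m => [|m IH]; first by rewrite bin0n.
rewrite binS bin1 mulnDl IH /=; case: m {IH} => [|m] //=; lia.
Qed.

Lemma num_edges_in_verts L : num_edges L = edges_in L (verts L).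
Proof.
rewrite /num_edges /edges_in; apply: eq_card => e; rewrite !inE.
by case: (boolP (e \in L)) => //= eL; rewrite sub_verts // andbT.
Qed.

Lemma edges_in_face L F : is_complex L -> F \in L -> edges_in L F = 'C(#|F|, 2).
Proof.
move=> cL FL; rewrite /edges_in -cards_draws; apply: eq_card => e; rewrite !inE.
case: (boolP (e \subset F)) => eF; rewrite ?andbF //= andbT.
by rewrite (cL _ _ FL eF).
Qed.

Lemma num_edges_split L A :
  num_edges L = #|meeting [set e in L | #|e| == 2] A| + edges_in L (verts L :\: A).
Proof.
have h := cardsID [set e : {set T} | [disjoint e & A]] [set e in L | #|e| == 2].
have e1 : #|[set e in L | #|e| == 2] :&: [set e : {set T} | [disjoint e & A]]| =
   edges_in L (verts L :\: A).
  apply: eq_card => e; rewrite !inE.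
  case: (boolP (e \in L)) => //= eL; case: (#|e| == 2) => //=.
  apply/idP/idP=> h'.
    apply/subsetP=> x xe; rewrite inE (subsetP (sub_verts eL) x xe) andbT.
    by rewrite (disjointFr h' xe).
  rewrite -setI_eq0; apply/eqP/setP=> x; rewrite !inE.
  apply/negP=> /andP[xe xA]; move/subsetP: h' => /(_ x xe).
  by rewrite inE xA.
have e2 : #|[set e in L | #|e| == 2] :\: [set e : {set T} | [disjoint e & A]]| =
   #|meeting [set e in L | #|e| == 2] A|.
  by apply: eq_card => e; rewrite /meeting !inE andbC.
by rewrite /num_edges -h e1 e2 addnC.
Qed.

Lemma edges_in_cone L v B : is_complex L -> B \subset verts (link L [set v]) ->
  edges_in L B + #|B| <= edges_in L (v |: B).
Proof.
move=> cL sB.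
have vB : v \notin B.
  by apply: contra (notin_verts_link1 v cL) => vB; apply: (subsetP sB).
set S1 := [set e in L | (#|e| == 2) && (e \subset B)].
set S2 := [set [set v; u] | u in B].
have cS2 : #|S2| = #|B| by rewrite card_imset //; apply: inj_pair.
have dj : [disjoint S1 & S2].
  rewrite -setI_eq0; apply/eqP/setP=> e; rewrite !inE.
  apply/negP=> /andP[/andP[_ /andP[_ eB]] /imsetP[u _ ee]].
  rewrite ee in eB.
  by move/subsetP: eB => /(_ v); rewrite !inE eqxx (negbTE vB) => /(_ isT).
have sub : S1 :|: S2 \subset [set e in L | (#|e| == 2) && (e \subset v |: B)].
  apply/subsetP=> e; rewrite in_setU => /orP[].
    rewrite !inE => /andP[-> /andP[-> eB]] /=.
    by apply: subset_trans eB (subsetUr _ _).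
  case/imsetP=> u uB ->; rewrite !inE.
  move/subsetP: sB => /(_ u uB); rewrite verts_link1 // => /andP[uv ->].
  rewrite cards2 (eq_sym v) uv /=; apply/subsetP=> x; rewrite !inE.
  by case/orP=> /eqP->; rewrite ?eqxx ?uB ?orbT.
by have := subset_leq_card sub; rewrite cardsU_disjoint // cS2.
Qed.

Lemma sparse_link1_bound L D v B : sparse D.+1 L -> is_complex L -> v \in verts L ->
  B \subset verts (link L [set v]) ->
  (exists2 f, f \in link L [set v] & (#|f| == D.+1) && (f \subset B)) ->
  edges_in L B + 'C(D.+2, 2) <= D.+1 * #|B|.
Proof.
move=> sp cL vV sB [f fK /andP[/eqP cf fB]].
have vB : v \notin B.
  by apply: contra (notin_verts_link1 v cL) => vB; apply: (subsetP sB).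
have := sp (v |: B) (verts_link1_sub cL vV sB).
have h : exists2 f, f \in L & (#|f| == D.+2) && (f \subset v |: B).
  exists (v |: f); first exact: link1_face.
  by rewrite cardsU1 (link1_notin cL fK) cf eqxx /=; apply: setUS.
move=> /(_ h); have := edges_in_cone cL sB.
rewrite cardsU1 vB binS bin1; lia.
Qed.

Lemma edges_in_link1 L v B : is_complex L -> edges_in (link L [set v]) B <= edges_in L B.
Proof.
move=> cL; apply: subset_leq_card; apply/subsetP=> e /setIdP[eK h].
by apply/setIdP; split=> //; move: eK; rewrite inE => /and3P[].
Qed.

Lemma sparse_link1 L D v : sparse D.+1 L -> is_complex L -> v \in verts L ->
  sparse D (link L [set v]).
Proof.
move=> sp cL vV B sB hf; have := sparse_link1_bound sp cL vV sB hf.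
have := edges_in_link1 v B cL; lia.
Qed.

(* A tight link already contains every edge of L between its vertices:
   sparsity of L leaves no room for more. *)
Lemma tight_link1_edge L D v e : sparse D.+1 L -> is_complex L -> v \in verts L ->
  tight D (link L [set v]) -> (exists2 f, f \in link L [set v] & #|f| == D.+1) ->
  e \in L -> #|e| = 2 -> e \subset verts (link L [set v]) -> e \in link L [set v].
Proof.
move=> sp cL vV tK [f fK cf] eL ce eN.
set K := link L [set v]; set N := verts K.
have := sparse_link1_bound sp cL vV (subxx N).
move=> /(_ (ex_intro2 _ _ f fK (introT andP (conj cf (sub_verts fK))))) le.
move: tK; rewrite /tight num_edges_in_verts => tK.
have sub : [set e in K | (#|e| == 2) && (e \subset N)] \subset
           [set e in L | (#|e| == 2) && (e \subset N)].
  apply/subsetP=> x /setIdP[xK h]; apply/setIdP; split=> //.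
  by move: xK; rewrite inE => /and3P[].
have /eqP E : [set e in K | (#|e| == 2) && (e \subset N)] ==
              [set e in L | (#|e| == 2) && (e \subset N)].
  by rewrite eqEcard sub /= -(leq_add2r 'C(D.+2, 2)) [X in _ <= X]tK.
have : e \in [set e in L | (#|e| == 2) && (e \subset N)] by rewrite inE eL ce eqxx eN.
by rewrite -E => /setIdP[].
Qed.

Lemma rigid_of_tight K D : is_complex K -> sparse D K -> tight D K ->
  rigid D.+1 (verts K) [set e in K | #|e| == 2] [set f in K | #|f| == D.+1].
Proof.
move=> cK sp tK; split.
- by move=> e; rewrite inE => /andP[eK _]; apply: sub_verts.
- by move=> e; rewrite inE => /andP[eK _]; apply: sub_verts.
move=> A sA [f]; rewrite inE => /andP[fK cf] dfA.
have fB : f \subset verts K :\: A.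
  apply/subsetP=> x xf; rewrite inE (subsetP (sub_verts fK) x xf) andbT.
  by rewrite (disjointFr dfA xf).
have := sp _ (subsetDl _ _) (ex_intro2 _ _ f fK (introT andP (conj cf fB))).
have := num_edges_split K A; move: tK; rewrite /tight.
have := cardsID A (verts K); rewrite (setIidPr sA).
move=> h1 h2 h3 h4; clear -h1 h2 h3 h4; nia.
Qed.

Lemma tight_of_rigid K D : is_complex K -> sparse D K ->
  (exists2 f, f \in K & #|f| == D.+1) ->
  rigid D.+1 (verts K) [set e in K | #|e| == 2] [set f in K | #|f| == D.+1] ->
  tight D K.
Proof.
move=> cK sp [F0 F0K /eqP cF0] [_ _ r].
have F0V := sub_verts F0K.
set A := verts K :\: F0.
have h1 : D.+1 * #|A| <= #|meeting [set e in K | #|e| == 2] A|.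
  apply: r; first exact: subsetDl.
  exists F0; first by apply/setIdP; split; last apply/eqP.
  by rewrite /A -setI_eq0 setDE setICA setICr setI0.
have h2 := num_edges_split K A.
rewrite (_ : verts K :\: A = F0) ?edges_in_face // ?cF0 in h2; last first.
  by rewrite setDDr setDv set0U (setIidPr F0V).
have h3 : #|A| = #|verts K| - D.+1 by rewrite cardsDS // cF0.
have h4 : D.+1 <= #|verts K| by rewrite -cF0; apply: subset_leq_card.
have : edges_in K (verts K) + 'C(D.+2, 2) <= D.+1 * #|verts K|.
  by apply: sp => //; exists F0 => //; rewrite F0V andbT; apply/eqP.
rewrite -num_edges_in_verts /tight binS bin1 => h5.
have h6 := bin2_mul2 D.+1.
clear -h1 h2 h3 h4 h5 h6; nia.
Qed.

Lemma sparse_of_min_rigid X d : min_q_rigid d.+1 X d -> sparse d X.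
Proof.
move=> [[_ [_ rig]] nE] B sB [f fX /andP[/eqP cf fB]].
set A := verts X :\: B.
have hf : exists f1, [/\ f1 \in X, #|f1| = d.+1 & [disjoint f1 & A]].
  exists f; split=> //; rewrite -setI_eq0; apply/eqP/setP=> x; rewrite !inE.
  by case: (boolP (x \in f)) => xf //=; rewrite (subsetP fB x xf).
have h1 := rig A (subsetDl _ _) hf.
have h2 : edges_meeting X A = #|meeting [set e in X | #|e| == 2] A|.
  by apply: eq_card => e; rewrite /meeting !inE andbA.
have h3 := num_edges_split X A.
rewrite (_ : verts X :\: A = B) in h3; last by rewrite setDDr setDv set0U (setIidPr sB).
have h5 : #|A| = #|verts X| - #|B| by rewrite cardsDS.
have h6 : #|B| <= #|verts X| by apply: subset_leq_card.
have h7 : d.+1 <= #|B| by rewrite -cf; apply: subset_leq_card.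
have h10 := bin2_mul2 d.+1.
rewrite binS bin1; rewrite h2 in h1.
clear -h1 h3 h5 h6 h7 h10 nE; nia.
Qed.

(** * The Euler characteristic bound for surfaces *)

Section Euler.
Variable L : {set {set T}}.
Hypothesis npL : normal_pseudomanifold L 2.

Let cL : is_complex L := np_complex npL.

Definition edges2 := [set e in L | #|e| == 2].
Definition triangles := [set t in L | #|t| == 3].
Definition cofaces (e : {set T}) := [set t in L | (#|t| == 3) && (e \subset t)].

Lemma in_edges2 e : (e \in edges2) = (e \in L) && (#|e| == 2).
Proof. by rewrite inE. Qed.

Lemma in_triangles t : (t \in triangles) = (t \in L) && (#|t| == 3).
Proof. by rewrite inE. Qed.

Lemma in_cofaces e t : (t \in cofaces e) = (t \in L) && ((#|t| == 3) && (e \subset t)).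
Proof. by rewrite inE. Qed.

Lemma card_cofaces e : e \in edges2 -> #|cofaces e| = 2.
Proof. by rewrite inE => /andP[eL /eqP ce]; apply: np_ridge. Qed.

Lemma cofacesE e : cofaces e = [set t in triangles | e \subset t].
Proof. by apply/setP=> t; rewrite !inE andbA. Qed.

Lemma cofaces_triangles e t : t \in cofaces e -> t \in triangles.
Proof. by rewrite cofacesE inE => /andP[]. Qed.

Lemma triangles_face t : t \in triangles -> t \in L.
Proof. by rewrite inE => /andP[]. Qed.

Lemma card_triangles t : t \in triangles -> #|t| = 3.
Proof. by rewrite inE => /andP[_ /eqP]. Qed.

Lemma edges2_pair x y : adj L x y -> [set x; y] \in edges2.
Proof. by case/andP=> xy h; rewrite inE h cards2 xy. Qed.

Lemma pair_cofaces t v u : t \in triangles -> v \in t -> u \in t -> u != v ->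
  [set v; u] \in edges2 /\ t \in cofaces [set v; u].
Proof.
move=> tT vt ut uv.
have sub : [set v; u] \subset t by apply/subsetP=> z; rewrite !inE => /orP[] /eqP ->.
rewrite in_edges2 (cL (triangles_face tT) sub) cards2 (eq_sym v) uv.
by rewrite in_cofaces (triangles_face tT) (card_triangles tT) eqxx sub.
Qed.

Lemma triangle_other_vertex t v : t \in triangles -> v \in t ->
  exists2 u, u \in t & u != v.
Proof.
move=> tT vt; have [u] : exists u, u \in t :\ v.
  apply/set0Pn; apply/negP=> /eqP e.
  by have := cardsD1 v t; rewrite vt e cards0 (card_triangles tT).
by rewrite !inE => /andP[uv ut]; exists u.
Qed.

Lemma edges_of_triangle t : t \in triangles -> #|[set e in edges2 | e \subset t]| = 3.
Proof.
move=> tT; have tL := triangles_face tT.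
rewrite (_ : [set e in edges2 | e \subset t] =
            [set e : {set T} | e \subset t & #|e| == 2]).
  by rewrite cards_draws (card_triangles tT).
apply/setP=> e; rewrite !inE; case: (boolP (e \subset t)) => et; last by rewrite andbF.
by rewrite (cL tL et) andbT.
Qed.

Lemma edges_triangles_count : 2 * #|edges2| = 3 * #|triangles|.
Proof.
have h1 : \sum_(e in edges2) #|cofaces e| = 2 * #|edges2|.
  rewrite (eq_bigr (fun _ => 2)); first by rewrite sum_nat_const mulnC.
  by move=> e eE; apply: card_cofaces.
have h2 : \sum_(t in triangles) #|[set e in edges2 | e \subset t]| = 3 * #|triangles|.
  rewrite (eq_bigr (fun _ => 3)); first by rewrite sum_nat_const mulnC.
  by move=> t tT; apply: edges_of_triangle.
rewrite -h1 -h2.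
under eq_bigr => e _ do rewrite cofacesE cards_sum_pred.
under [RHS]eq_bigr => t _ do rewrite cards_sum_pred.
exact: exchange_big.
Qed.

(* Stands for "F is a forest": every nonempty set of its edges has a leaf. *)
Definition leafy (F : {set {set T}}) := forall P : {set {set T}}, P \subset F ->
  P != set0 -> exists x, #|[set e in P | x \in e]| = 1.

Lemma spanning_tree_exists : exists2 F : {set {set T}},
  F \subset edges2 & #|F| + 1 = #|verts L| /\ leafy F.
Proof.
have [t0 t0L /eqP ct0] := np_top_face npL.
have /card_gt0P[v0 v0t] : 0 < #|t0| by rewrite ct0.
pose P (S : {set T}) := exists2 F : {set {set T}}, F \subset edges2 &
  [/\ forall e, e \in F -> e \subset S, #|F| + 1 = #|S| & leafy F].
suff [F sF [_ cF lF]] : P (verts L) by exists F.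
apply: (@connected_grow L P v0 (np_connected npL)).
- exact: subsetP (sub_verts t0L) _ v0t.
- exists set0; rewrite ?sub0set ?cards0 ?cards1 //; split=> //.
    by move=> e; rewrite inE.
  by move=> Q; rewrite subset0 => /eqP ->; rewrite eqxx.
move=> S x y _ xS yS axy [F sF [FS cF lF]].
have xyF : [set x; y] \notin F.
  apply/negP=> /FS /subsetP /(_ y); rewrite !inE eqxx orbT => /(_ isT).
  by rewrite (negbTE yS).
exists ([set x; y] |: F); first by rewrite subUset sub1set edges2_pair.
split; first move=> e /setU1P[->|eF].
- by apply/subsetP=> z; rewrite !inE => /orP[] /eqP ->; rewrite ?eqxx ?xS ?orbT.
- by apply: subset_trans (FS e eF) (subsetUr _ _).
- by rewrite !cardsU1 xyF yS -cF.
move=> Q sQ nQ; case: (boolP ([set x; y] \in Q)) => xyQ.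
  exists y; apply/eqP/cards1P; exists [set x; y]; apply/setP=> e.
  rewrite !inE; apply/andP/eqP; last by move=> ->; rewrite xyQ !inE eqxx orbT.
  case=> eQ ye; move/subsetP: sQ => /(_ e eQ) /setU1P[//|eF].
  by move/subsetP: (FS e eF) => /(_ y ye); rewrite (negbTE yS).
apply: lF nQ; apply/subsetP=> e eQ; move/subsetP: sQ => /(_ e eQ) /setU1P[eq|//].
by move: xyQ; rewrite -eq eQ.
Qed.

Definition edge_closed (S : {set {set T}}) := forall e t t', e \in edges2 ->
  t \in cofaces e -> t' \in cofaces e -> t \in S -> t' \in S.

Lemma edge_closed_share (S : {set {set T}}) t t' v u :
  edge_closed S -> t \in S -> t \in triangles -> t' \in triangles ->
  v \in t -> u \in t -> v \in t' -> u \in t' -> u != v -> t' \in S.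
Proof.
move=> clS tS tT t'T vt ut vt' ut' uv.
have [eE te] := pair_cofaces tT vt ut uv.
by have [_ t'e] := pair_cofaces t'T vt' ut' uv; apply: clS eE te t'e tS.
Qed.

(* The link of [v] is connected, and crossing one of its edges [u w] is crossing
   the edge [v u] of L between the triangles containing [v u w]. *)
Lemma edge_closed_star (S : {set {set T}}) v : S \subset triangles -> edge_closed S ->
  (exists2 t, t \in S & v \in t) -> forall t, t \in triangles -> v \in t -> t \in S.
Proof.
move=> sS clS [t0 t0S vt0].
have ST t1 : t1 \in S -> t1 \in triangles by apply: (subsetP sS).
have v1 : [set v] \in L by apply: cL (triangles_face (ST _ t0S)) _; rewrite sub1set.
have lkc : connected_cx (link L [set v]).
  by apply: (np_link_connected npL v1); rewrite cards1.
set U := [set u | [exists t in S, (u \in t) && (v \in t)]].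
have inU u t : t \in S -> u \in t -> v \in t -> u \in U.
  by move=> tS ut vt; rewrite inE; apply/existsP; exists t; rewrite tS ut vt.
have stepU u w : adj (link L [set v]) u w -> u \in U -> w \in U.
  move=> /andP[uw]; rewrite in_link1 // => /andP[vuw tL].
  rewrite inE => /existsP[t1 /andP[t1S /andP[ut1 vt1]]].
  have [uv wv] : u != v /\ w != v.
    by split; apply: contraNneq vuw => <-; rewrite !inE eqxx ?orbT.
  have tT : v |: [set u; w] \in triangles.
    by rewrite in_triangles tL cardsU1 vuw cards2 uw.
  apply: (inU _ (v |: [set u; w])); rewrite ?setU11 ?(inE, eqxx, orbT) //.
  by apply: (edge_closed_share clS t1S (ST _ t1S) tT vt1 ut1);
     rewrite ?(inE, eqxx, orbT).
have clU : closed (adj (link L [set v])) U.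
  move=> x y axy; apply/idP/idP; first exact: stepU.
  by apply: stepU; rewrite adj_sym.
have inK u t : t \in triangles -> u \in t -> v \in t -> u != v ->
    u \in verts (link L [set v]).
  move=> tT ut vt uv; rewrite verts_link1 // uv /=.
  by apply: cL (triangles_face tT) _; apply/subsetP=> z; rewrite !inE => /orP[] /eqP ->.
have [u0 u0t uv0] := triangle_other_vertex (ST _ t0S) vt0.
move=> t tT vt; have [u ut uv] := triangle_other_vertex tT vt.
have : u \in U.
  have u0K := inK _ _ (ST _ t0S) u0t vt0 uv0.
  rewrite -(closed_connect clU (lkc _ _ u0K (inK _ _ tT ut vt uv))).
  exact: inU t0S u0t vt0.
rewrite inE => /existsP[t1 /andP[t1S /andP[ut1 vt1]]].
exact: (edge_closed_share clS t1S (ST _ t1S) tT vt1 ut1 vt ut uv).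
Qed.

Lemma boundary_edge_exists (S : {set {set T}}) : S \subset triangles -> S != set0 ->
  S != triangles ->
  exists e t t',
    [/\ e \in edges2, t \in cofaces e, t' \in cofaces e, t \in S & t' \notin S].
Proof.
move=> sS nS nT.
case: (boolP [exists e, [exists t, [exists t', [&& e \in edges2, t \in cofaces e,
  t' \in cofaces e, t \in S & t' \notin S]]]]).
  by case/existsP=> e /existsP[t /existsP[t' /and5P[]]]; exists e, t, t'.
move=> /negP nex.
have clS : edge_closed S.
  move=> e t t' eE tt t't tS; apply/negPn/negP=> t'S; apply: nex.
  apply/existsP; exists e; apply/existsP; exists t; apply/existsP; exists t'.
  by rewrite eE tt t't tS t'S.
have star x (t : {set T}) :
    x \in t -> t \in triangles -> (exists2 t1, t1 \in S & x \in t1) -> t \in S.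
  by move=> xt tT hx; apply: (edge_closed_star sS clS hx).
set P := [set x | [exists t in S, x \in t]].
have inP x : reflect (exists2 t, t \in S & x \in t) (x \in P).
  rewrite inE; apply: (iffP existsP) => [[t /andP[]]|[t tS xt]]; first by exists t.
  by exists t; rewrite tS.
have stepP x y : adj L x y -> x \in P -> y \in P.
  move=> axy /inP hx; have eE := edges2_pair axy.
  have /card_gt0P[t tt] : 0 < #|cofaces [set x; y]| by rewrite card_cofaces.
  have xyt : [set x; y] \subset t by move: tt; rewrite in_cofaces => /and3P[].
  apply/inP; exists t; last by apply: (subsetP xyt); rewrite !inE eqxx orbT.
  by apply: (star x t (subsetP xyt _ (set21 _ _)) (cofaces_triangles tt) hx).
have clP : closed (adj L) P.
  move=> x y axy; apply/idP/idP; first exact: stepP.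
  by apply: stepP; rewrite adj_sym.
have vertex (t : {set T}) : t \in triangles -> exists2 x, x \in t & x \in verts L.
  move=> tT; have /card_gt0P[x xt] : 0 < #|t| by rewrite card_triangles.
  by exists x => //; apply: subsetP (sub_verts (triangles_face tT)) _ xt.
case/set0Pn: nS => t0 t0S; have [x0 x0t0 x0V] := vertex _ (subsetP sS _ t0S).
case/negP: nT; rewrite eqEsubset sS; apply/subsetP=> t tT.
have [x xt xV] := vertex _ tT.
have : x \in P.
  by rewrite -(closed_connect clP (np_connected npL x0V xV)); apply/inP; exists t0.
by move/inP; apply: star xt tT.
Qed.

Lemma edges_at_vertex_of_triangle (t : {set T}) x : #|t| = 3 -> x \in t ->
  #|[set e : {set T} | (e \subset t) && (#|e| == 2) && (x \in e)]| = 2.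
Proof.
move=> ct xt.
set A := [set e : {set T} | e \subset t & #|e| == 2].
have := cardsID [set e : {set T} | x \in e] A.
have -> : A :\: [set e : {set T} | x \in e] =
          [set e : {set T} | e \subset t :\ x & #|e| == 2].
  apply/setP=> e; rewrite !inE subsetD1.
  by case: (x \in e); case: (e \subset t); rewrite ?andbF.
have -> : [set e : {set T} | (e \subset t) && (#|e| == 2) && (x \in e)] =
  A :&: [set e : {set T} | x \in e] by apply/setP=> e; rewrite !inE.
have cA : #|A| = 3 by rewrite cards_draws ct.
rewrite cards_draws cA (_ : #|t :\ x| = 2) ?binn; first by move=> h; lia.
by have := cardsD1 x t; rewrite xt ct => -[].
Qed.

(* Each triangle of [S] at [x] has two edges at [x]; so edges at [x] in exactly
   one triangle of [S] are counted an even number of times. *)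
Lemma boundary_degree_even (S : {set {set T}}) x : S \subset triangles ->
  ~~ odd #|[set e in edges2 | (x \in e) && (#|[set t in S | e \subset t]| == 1)]|.
Proof.
move=> sS.
pose f (e : {set T}) := #|[set t in S | e \subset t]|.
set Ex := [set e in edges2 | x \in e].
have f2 e : e \in edges2 -> f e <= 2.
  move=> eE; rewrite -(card_cofaces eE); apply: subset_leq_card.
  apply/subsetP=> t; rewrite !inE => /andP[tS et].
  by have := subsetP sS t tS; rewrite in_triangles => /andP[-> ->]; rewrite et.
have hsum : \sum_(e in Ex) f e = 2 * \sum_(t in S) (x \in t).
  rewrite /f; under eq_bigr => e _ do rewrite cards_sum_pred.
  rewrite exchange_big big_distrr /=; apply: eq_bigr => t tS.
  rewrite -cards_sum_pred.
  have tT : t \in triangles by apply: (subsetP sS).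
  case: (boolP (x \in t)) => xt.
    rewrite muln1 -(edges_at_vertex_of_triangle (card_triangles tT) xt).
    apply: eq_card => e; rewrite !inE.
    case: (boolP (e \subset t)) => et; last by rewrite !andbF.
    by rewrite (cL (triangles_face tT) et) /= andbT; case: (x \in e); case: (#|e| == 2).
  rewrite muln0; apply/eqP; rewrite cards_eq0; apply/eqP/setP=> e; rewrite !inE.
  by apply/negP=> /andP[/andP[_ xe] /subsetP et]; move: xt; rewrite (et x xe).
have hsplit : \sum_(e in Ex) f e =
    \sum_(e in Ex) (f e == 1) + 2 * \sum_(e in Ex) (f e == 2).
  rewrite big_distrr -big_split; apply: eq_bigr => e; rewrite inE => /andP[eE _].
  by have := f2 e eE; case: (f e) => [|[|[|n]]].
have -> : #|[set e in edges2 | (x \in e) && (f e == 1)]| = \sum_(e in Ex) (f e == 1).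
  by rewrite -cards_sum_pred; apply: eq_card => e; rewrite !inE andbA.
move: hsum; rewrite hsplit => h.
have -> : \sum_(e in Ex) (f e == 1) =
   2 * (\sum_(t in S) (x \in t) - \sum_(e in Ex) (f e == 2)) by clear -h; lia.
by rewrite oddM.
Qed.

Lemma cofaces_in (S : {set {set T}}) (e : {set T}) : S \subset triangles ->
  [set t in S | e \subset t] = cofaces e :&: S.
Proof.
move=> sS; apply/setP=> t; rewrite !inE.
case: (boolP (t \in S)) => tS; rewrite ?andbF //= andbT.
by have := subsetP sS t tS; rewrite in_triangles => /andP[-> ->].
Qed.

(* Boundary edges have even degree at every vertex, so they cannot all lie in a forest. *)
Lemma boundary_edge_off_forest (F S : {set {set T}}) : F \subset edges2 -> leafy F ->
  S \subset triangles -> S != set0 -> S != triangles ->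
  exists2 e, e \in edges2 :\: F & #|cofaces e :&: S| = 1.
Proof.
move=> sF lF sS nS nT.
set Bd := [set e in edges2 | #|cofaces e :&: S| == 1].
suff [e eB eF] : exists2 e, e \in Bd & e \notin F.
  by move: eB; rewrite inE => /andP[eE /eqP]; exists e; rewrite // inE eF.
apply/exists_inP; rewrite -negb_forall_in; apply/negP => /forall_inP BdF.
have [e [t [t' [eE tt t't tS t'S]]]] := boundary_edge_exists sS nS nT.
have eB : e \in Bd.
  rewrite inE eE /= eqn_leq card_gt0 andbC; apply/andP; split.
    by apply/set0Pn; exists t; rewrite inE tt.
  rewrite -ltnS -(card_cofaces eE) (cardsD1 t') t't add1n ltnS subset_leq_card //.
  apply/subsetP=> z; rewrite !inE => /andP[zt zS].
  by rewrite zt andbT; apply: contraNneq t'S => <-.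
have [x hx] : exists x, #|[set e in Bd | x \in e]| = 1.
  by apply: lF; [apply/subsetP | apply/set0Pn; exists e].
have := boundary_degree_even x sS.
rewrite (_ : [set e in edges2 | _] = [set e in Bd | x \in e]) ?hx //.
by apply/setP=> z; rewrite !inE cofaces_in //; case: (x \in z); rewrite ?andbT ?andbF.
Qed.

(* Triangles are added one at a time across edges outside the forest, each used once. *)
Lemma triangles_le_forest_complement (F : {set {set T}}) : F \subset edges2 -> leafy F ->
  #|triangles| <= #|edges2 :\: F| + 1.
Proof.
move=> sF lF; have [t0 t0L /eqP ct0] := np_top_face npL.
pose P (S : {set {set T}}) := exists2 N : {set {set T}}, N \subset edges2 :\: F &
  #|N| + 1 = #|S| /\ forall e, e \in N -> cofaces e \subset S.
suff [N sN [<- _]] : P triangles by rewrite leq_add2r subset_leq_card.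
apply: (@grow_ind _ triangles [set t0]); first by rewrite sub1set in_triangles t0L ct0.
  by exists set0; rewrite ?sub0set ?cards0 ?cards1 //; split=> // e; rewrite inE.
move=> S sS nT [N sN [cN NS]].
have nS : S != set0 by rewrite -card_gt0 -cN addn1.
have [e1 e1EF c1] := boundary_edge_off_forest sF lF sS nS nT.
have [e1F e1E] : e1 \notin F /\ e1 \in edges2 by move: e1EF; rewrite inE => /andP[].
have /cards1P[t2 t2E] : #|cofaces e1 :\: S| == 1.
  by have := cardsID S (cofaces e1); rewrite c1 card_cofaces // add1n => -[->].
have [t2e1 t2S] : t2 \in cofaces e1 /\ t2 \notin S.
  by apply/andP; rewrite andbC -in_setD t2E set11.
have e1N : e1 \notin N.
  by apply: contra t2S => /NS /subsetP; apply.
exists t2; first by rewrite inE t2S (cofaces_triangles t2e1).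
exists (e1 |: N); first by rewrite subUset sub1set e1EF sN.
split; first by rewrite !cardsU1 e1N t2S -cN.
move=> e /setU1P[->|eN]; last by apply: subset_trans (NS e eN) (subsetUr _ _).
apply/subsetP=> t te1; rewrite inE; case: (boolP (t \in S)) => tS; rewrite ?orbT //.
have : t \in cofaces e1 :\: S by rewrite inE tS.
by rewrite t2E inE => ->.
Qed.

Lemma euler_bound : 3 * #|verts L| <= num_edges L + 6.
Proof.
have [F sF [cF lF]] := spanning_tree_exists.
have := triangles_le_forest_complement sF lF; rewrite cardsDS // => h.
have := edges_triangles_count; have := subset_leq_card sF.
rewrite /num_edges -/edges2; lia.
Qed.

End Euler.

(** * Induction on the dimension *)

(* The star of [v] is the cone over its link; stars of adjacent vertices share a
   facet, so they glue along the connected edge graph. *)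
Lemma rigid_of_tight_links L D : normal_pseudomanifold L D.+2 -> sparse D.+2 L ->
  (forall v, v \in verts L -> tight D.+1 (link L [set v])) ->
  rigid D.+3 (verts L) [set e in L | #|e| == 2] [set f in L | #|f| == D.+3].
Proof.
move=> npL sp tK; have cL := np_complex npL.
pose K v := link L [set v].
pose W v := v |: verts (K v).
pose E v := [set e in K v | #|e| == 2] :|: [set [set v; w] | w in verts (K v)].
pose F v := [set v |: f | f in [set f in K v | #|f| == D.+2]].
have rW v : v \in verts L -> rigid D.+3 (W v) (E v) (F v).
  move=> vV; apply: rigid_cone; last exact: notin_verts_link1.
  by apply: rigid_of_tight; [exact: is_complex_link | exact: sparse_link1 | exact: tK].
have inF v t : t \in L -> #|t| = D.+3 -> v \in t -> t \in F v.
  move=> tL ct vt; apply/imsetP; exists (t :\ v); last by rewrite setD1K.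
  rewrite inE face_link1 //=; have := cardsD1 v t; rewrite vt ct => -[->].
  by rewrite eqxx.
have adjF x y : adj L x y -> exists2 f, f \in F x & f \in F y.
  move=> /andP[xy xyL]; have [t tL /andP[/eqP ct st]] := pure_facet_ext (np_pure npL) xyL.
  by exists t; apply: inF => //; apply: (subsetP st); rewrite !inE eqxx ?orbT.
have [f0 f0L /eqP cf0] := np_top_face npL.
have V0 : verts L != set0.
  apply/set0Pn; have /card_gt0P[x xf0] : 0 < #|f0| by rewrite cf0.
  by exists x; apply: (subsetP (sub_verts f0L)).
have := rigid_bigcup (np_connected npL) V0 rW adjF.
have -> : \bigcup_(v in verts L) W v = verts L.
  apply/eqP; rewrite eqEsubset; apply/andP; split.
    by apply/bigcupsP=> v vV; exact: verts_link1_sub.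
  by apply/subsetP=> v vV; apply/bigcupP; exists v => //; exact: setU11.
move=> r; apply: rigidS r _ _ _.
- apply/bigcupsP=> v vV; apply/subsetP=> e; rewrite !inE.
  case/orP=> [/andP[/and3P[-> _ _] ->] //|/imsetP[w wK ->]].
  move: wK; rewrite verts_link1 // => /andP[wv ->].
  by rewrite cards2 (eq_sym v) wv.
- apply/subsetP=> t; rewrite inE => /andP[tL /eqP ct].
  have /card_gt0P[v vt] : 0 < #|t| by rewrite ct.
  apply/bigcupP; exists v; last exact: inF.
  exact: (subsetP (sub_verts tL)).
- by move=> e; rewrite inE => /andP[eL _]; apply: sub_verts.
Qed.

Lemma sparse_np_tight n L : normal_pseudomanifold L n.+2 -> sparse n.+2 L ->
  tight n.+2 L.
Proof.
elim: n L => [|n IH] L npL sp.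
  have [f fL /eqP cf] := np_top_face npL.
  have := sp (verts L) (subxx _) (ex_intro2 _ _ f fL _).
  rewrite cf sub_verts // -num_edges_in_verts /tight => /(_ isT).
  by have := euler_bound npL; rewrite (_ : 'C(4, 2) = 6) //; lia.
have cL := np_complex npL.
apply: tight_of_rigid => //; first exact: np_top_face npL.
apply: rigid_of_tight_links => // v vV.
by apply: IH; [apply: np_link1 | apply: sparse_link1].
Qed.

Lemma small_clique_face L C : is_complex L -> set0 \in L -> is_clique L C ->
  #|C| <= 2 -> C \in L.
Proof.
move=> cL L0 [sC clC]; rewrite leq_eqVlt => /orP[/cards2P[x [y [xy eC]]]|].
  by rewrite eC; apply: clC; rewrite // eC !inE eqxx ?orbT.
rewrite ltnS leq_eqVlt => /orP[/cards1P[x eC]|]; last first.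
  by rewrite ltnS leqn0 cards_eq0 => /eqP ->.
by rewrite eC; apply/vertsP => //; apply: (subsetP sC); rewrite eC set11.
Qed.

Lemma clique_face_of_links L D : normal_pseudomanifold L D.+2 -> sparse D.+2 L ->
  (forall v, v \in verts L -> tight D.+1 (link L [set v]) /\
     forall C, is_clique (link L [set v]) C -> #|C| <= D.+1 -> C \in link L [set v]) ->
  forall C, is_clique L C -> #|C| <= D.+2 -> C \in L.
Proof.
move=> npL sp hK C [sC clC] cC; have cL := np_complex npL.
have [/set0Pn[v vC]|/negPn/eqP->] := boolP (C != set0); last first.
  by have [f fL _] := np_top_face npL; apply: cL fL (sub0set _).
have vV : v \in verts L by apply: (subsetP sC).
have [tK clK] := hK v vV.
have fK := np_top_face (np_link1 npL (ltn0Sn _) vV).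
have sC' : C :\ v \subset verts (link L [set v]).
  apply/subsetP=> u; rewrite !inE => /andP[uv uC]; rewrite verts_link1 // uv /=.
  by apply: clC => //; rewrite eq_sym.
suff /(link1_face cL) : C :\ v \in link L [set v] by rewrite setD1K.
apply: clK; last by have := cardsD1 v C; rewrite vC => h; lia.
split=> // u w /setD1P[uv uC] /setD1P[wv wC] uw.
apply: (tight_link1_edge sp cL vV tK fK (clC _ _ uC wC uw)); first by rewrite cards2 uw.
rewrite subUset !sub1set; apply/andP; split; apply: (subsetP sC'); exact/setD1P.
Qed.

Lemma sparse_np_clique_face n L : normal_pseudomanifold L n.+2 -> sparse n.+2 L ->
  forall C, is_clique L C -> #|C| <= n.+2 -> C \in L.
Proof.
elim: n L => [|n IH] L npL sp.
  have [f fL _] := np_top_face npL; have cL := np_complex npL.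
  by move=> C; apply: small_clique_face => //; apply: cL fL (sub0set _).
have cL := np_complex npL.
apply: clique_face_of_links => // v vV.
have npK := np_link1 npL (ltn0Sn _) vV; have spK := sparse_link1 sp cL vV.
by split; [apply: sparse_np_tight | apply: IH].
Qed.

End Complexes.

Theorem lemma7p3 (T : finType) (X : {set {set T}}) (d : nat) :
  3 <= d -> normal_pseudomanifold X d -> min_q_rigid d.+1 X d ->
  forall C : {set T}, is_clique X C -> #|C| <= d -> C \in X.
Proof.
case: d => [|[|d]] // _ npX /sparse_of_min_rigid spX.
exact: sparse_np_clique_face npX spX.
Qed.
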